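(* Let $n \geq 2$ be an integer. There exists a greatest integer $w$ such that there is an S-template with width $w$ and $n$ colors; denote it $S^+(n)$. Moreover, $$2S(n-1)+1 \leq S^+(n) \leq S(n).$$
   Context: A set $A \subseteq \mathbb{N}$ is sum-free if for all $(a,b)\in A^2$ (allowing $a=b$), $a+b \notin A$. For $n\ge 1$, the Schur number $S(n)$ is the largest integer $p$ such that $\{1,\dots,p\}$ can be partitioned into $n$ sum-free subsets. For positive integers $p,n$, an S-template with $n$ colors and width $p$ is a partition of $\{1,\dots,p\}$ into $n$ sum-free subsets $A_1,\dots,A_n$ such that for every $i \in \{1,\dots,n-1\}$ (i.e. every subset except $A_n$) and all $(x,y)\in A_i^2$: if $x+y>p$ then $x+y-p \notin A_i$. *)

From Stdlib Require Import Arith Lia.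

Definition sum_free (A : nat -> Prop) : Prop :=
  forall a b, A a -> A b -> ~ A (a + b).

Definition block (p : nat) (c : nat -> nat) (i : nat) : nat -> Prop :=
  fun x => 1 <= x <= p /\ c x = i.

Definition sum_free_partition (n p : nat) (c : nat -> nat) : Prop :=
  (forall x, 1 <= x <= p -> c x < n) /\
  (forall i, i < n -> sum_free (block p c i)).

Definition schur_partitionable (n p : nat) : Prop :=
  exists c, sum_free_partition n p c.

Definition is_schur_number (n s : nat) : Prop :=
  schur_partitionable n s /\ (forall p, schur_partitionable n p -> p <= s).

(* S-template with n colours and width p: a sum-free partition such that for
   every colour i except the last one (i.e. i < n-1, the paper's A_1..A_{n-1};
   the colour n-1 plays the role of A_n) and all x, y in A_i with x + y > p,
   x + y - p is not in A_i. *)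
Definition S_template (n p : nat) (c : nat -> nat) : Prop :=
  sum_free_partition n p c /\
  (forall i, i < n - 1 ->
     forall x y, block p c i x -> block p c i y -> p < x + y ->
       ~ block p c i (x + y - p)).

Definition has_S_template (n p : nat) : Prop := exists c, S_template n p c.

(* An S-template is in particular a sum-free partition, so its width is bounded
   by Schur's theorem, which makes the maximal width exist and gives S+(n) <= S(n).
   Schur's theorem is proved in the quantitative form S(r) < floor(e r!): if all
   pairwise differences of a set use at most r sum-free colours, pigeonhole sorts
   the differences to its least element into r classes, and inside the largest
   class the differences avoid that class's colour, which recurses with r - 1
   colours.  For the lower bound, colour {1..s} by a sum-free partition into n - 1
   colours and (s, 2s+1] by the last colour: two old-coloured numbers never sum
   beyond the width 2s+1, and two new-coloured ones always do. *)

From Stdlib Require Import List Arith Lia Sorted Classical.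

Lemma ex_max_nat (P : nat -> Prop) (B : nat) :
  (exists p, P p) -> (forall p, P p -> p <= B) ->
  exists w, P w /\ forall p, P p -> p <= w.
Proof.
  induction B as [|B IH]; intros [p0 Hp0] Hbound.
  - exists p0; split; [assumption|].
    intros p Hp; pose proof (Hbound p Hp); pose proof (Hbound p0 Hp0); lia.
  - destruct (classic (P (S B))) as [HSB|HSB].
    + exists (S B); auto.
    + apply IH; [exists p0; assumption|].
      intros p Hp; destruct (Nat.eq_dec p (S B)) as [->|Hne]; [contradiction|].
      pose proof (Hbound p Hp); lia.
Qed.

Lemma length_filter_filter_le (f g : nat -> bool) (l : list nat) :
  length (filter f (filter g l)) <= length (filter f l).
Proof.
  induction l as [|x l IH]; simpl; [lia|].
  destruct (g x); simpl; destruct (f x); simpl; lia.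
Qed.

Lemma exists_large_fibre (f : nat -> nat) (k : nat) (u : list nat) :
  forall l, (forall x, In x l -> In (f x) u) -> length u * k < length l ->
  exists a, In a u /\ k < length (filter (fun x => f x =? a) l).
Proof.
  induction u as [|a u IH]; intros l Hmaps Hlen.
  - destruct l as [|x l]; simpl in Hlen; [lia|].
    destruct (Hmaps x); simpl; auto.
  - destruct (Nat.lt_ge_cases k (length (filter (fun x => f x =? a) l)))
      as [Hlarge|Hsmall].
    + exists a; split; [left|]; auto.
    + set (rest := filter (fun x => negb (f x =? a)) l).
      destruct (IH rest) as [b [Hb Hfibre]].
      * intros x Hx; apply filter_In in Hx as [Hx Hne].
        destruct (Hmaps x Hx) as [Heq|Hin]; [|assumption].
        rewrite Heq, Nat.eqb_refl in Hne; discriminate.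
      * pose proof (filter_length (fun x => f x =? a) l).
        simpl in Hlen; unfold rest; lia.
      * exists b; split; [right; assumption|].
        pose proof (length_filter_filter_le (fun x => f x =? b)
                      (fun x => negb (f x =? a)) l).
        unfold rest in Hfibre; lia.
Qed.

Lemma StronglySorted_filter {A} (R : A -> A -> Prop) (f : A -> bool) (l : list A) :
  StronglySorted R l -> StronglySorted R (filter f l).
Proof.
  induction 1 as [|x l _ IH Hx]; simpl; [constructor|].
  destruct (f x); [|assumption].
  constructor; [assumption|].
  exact (incl_Forall (incl_filter f l) Hx).
Qed.

Lemma StronglySorted_seq (len : nat) : forall start, StronglySorted lt (seq start len).
Proof.
  induction len as [|len IH]; intros start; simpl; constructor; [apply IH|].
  apply Forall_forall; intros x Hx; apply in_seq in Hx; lia.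
Qed.

(* [schur_bound r = floor (e * r!)]. *)
Fixpoint schur_bound (r : nat) : nat :=
  match r with
  | 0 => 1
  | S r' => S (S r' * schur_bound r')
  end.

Section DifferenceColouring.
Variables (p : nat) (c : nat -> nat).

Definition differences_coloured (u l : list nat) : Prop :=
  forall x y, In x l -> In y l -> x < y -> In (c (y - x)) u.

Lemma differences_coloured_fibre (u l : list nat) (m a : nat) :
  sum_free (block p c a) -> (forall y, In y l -> m < y <= p) ->
  differences_coloured u (m :: l) ->
  differences_coloured (remove Nat.eq_dec a u)
    (filter (fun x => c (x - m) =? a) l).
Proof.
  intros Hsf Hrange Hdiff x y Hx Hy Hxy.
  apply filter_In in Hx as [Hx Hcx], Hy as [Hy Hcy].
  apply Nat.eqb_eq in Hcx, Hcy.
  apply in_in_remove; [|apply Hdiff; simpl; auto].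
  intros Hcxy.
  pose proof (Hrange x Hx); pose proof (Hrange y Hy).
  apply (Hsf (x - m) (y - x)); [split; [lia|auto] .. |].
  replace (x - m + (y - x)) with (y - m) by lia.
  split; [lia|assumption].
Qed.

Lemma differences_coloured_length_le (r : nat) : forall u l,
  length u <= r -> (forall a, In a u -> sum_free (block p c a)) ->
  StronglySorted lt l -> (forall x, In x l -> x <= p) ->
  differences_coloured u l -> length l <= schur_bound r.
Proof.
  induction r as [|r IH]; intros u l Hu Hsf Hsorted Hle Hdiff.
  - destruct u; [|simpl in Hu; lia].
    destruct l as [|x [|y l]]; simpl; [lia|lia|exfalso].
    apply StronglySorted_inv in Hsorted as [_ Hx].
    apply (Hdiff x y); simpl; auto.
    apply (proj1 (Forall_forall _ _) Hx); simpl; auto.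
  - destruct l as [|m l]; simpl; [lia|].
    apply StronglySorted_inv in Hsorted as [Hsorted Hm].
    assert (Hrange : forall y, In y l -> m < y <= p).
    { intros y Hy; split; [exact (proj1 (Forall_forall _ _) Hm y Hy)|].
      apply Hle; simpl; auto. }
    apply Nat.nlt_ge; intros Hlong.
    destruct (exists_large_fibre (fun x => c (x - m)) (schur_bound r) u l)
      as [a [Ha Hfibre]].
    { intros x Hx; apply Hdiff; simpl; auto; apply Hrange, Hx. }
    { nia. }
    apply (proj1 (Nat.lt_nge _ _) Hfibre).
    apply (IH (remove Nat.eq_dec a u)).
    + pose proof (remove_length_lt Nat.eq_dec u a Ha); lia.
    + intros b Hb; apply in_remove in Hb as [Hb _]; apply Hsf, Hb.
    + apply StronglySorted_filter, Hsorted.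
    + intros x Hx; apply filter_In in Hx as [Hx _]; apply Hrange, Hx.
    + apply differences_coloured_fibre; auto.
Qed.

End DifferenceColouring.

Lemma sum_free_partition_lt_schur_bound (n p : nat) (c : nat -> nat) :
  sum_free_partition n p c -> p < schur_bound n.
Proof.
  intros [Hcol Hsf].
  enough (length (seq 0 (S p)) <= schur_bound n) by (rewrite length_seq in *; lia).
  apply (differences_coloured_length_le p c n (seq 0 n)).
  - rewrite length_seq; lia.
  - intros a Ha; apply in_seq in Ha; apply Hsf; lia.
  - apply StronglySorted_seq.
  - intros x Hx; apply in_seq in Hx; lia.
  - intros x y _ Hy Hxy; apply in_seq in Hy; apply in_seq.
    specialize (Hcol (y - x)); lia.
Qed.

Lemma has_S_template_0 (n : nat) : has_S_template n 0.
Proof.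
  exists (fun _ => 0); split; [split|].
  - intros x Hx; lia.
  - intros i _ a b [Ha _]; lia.
  - intros i _ x y [Hx _]; lia.
Qed.

Lemma has_S_template_lt_schur_bound (n p : nat) :
  has_S_template n p -> p < schur_bound n.
Proof.
  intros [c [Hc _]]; exact (sum_free_partition_lt_schur_bound n p c Hc).
Qed.

Definition extend_colouring (n s : nat) (c : nat -> nat) (x : nat) : nat :=
  if x <=? s then c x else n.

Section ExtendColouring.
Variables (n s : nat) (c : nat -> nat).
Hypothesis Hc : sum_free_partition n s c.

Lemma block_extend_colouring_lt (i x : nat) : i < n ->
  block (2 * s + 1) (extend_colouring n s c) i x -> block s c i x.
Proof.
  unfold extend_colouring; intros Hi [Hx Hcx].
  destruct (Nat.leb_spec x s); split; lia.
Qed.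

Lemma block_extend_colouring_last (x : nat) :
  block (2 * s + 1) (extend_colouring n s c) n x -> s < x <= 2 * s + 1.
Proof.
  unfold extend_colouring; intros [Hx Hcx].
  destruct (Nat.leb_spec x s); [|lia].
  pose proof (proj1 Hc x); lia.
Qed.

Lemma S_template_extend_colouring :
  S_template (S n) (2 * s + 1) (extend_colouring n s c).
Proof.
  destruct Hc as [Hcol Hsf].
  split; [split|].
  - unfold extend_colouring; intros x Hx.
    destruct (Nat.leb_spec x s); [specialize (Hcol x)|]; lia.
  - intros i Hi a b Ha Hb Hab.
    destruct (Nat.eq_dec i n) as [->|Hne].
    + apply block_extend_colouring_last in Ha, Hb, Hab; lia.
    + apply (Hsf i ltac:(lia) a b); apply block_extend_colouring_lt; auto; lia.
  - intros i Hi x y Hx Hy Hxy _.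
    apply block_extend_colouring_lt in Hx, Hy; try lia.
    destruct Hx as [Hx _], Hy as [Hy _]; lia.
Qed.

End ExtendColouring.

Theorem proposition2p2 (n : nat) (Hn : 2 <= n) :
  exists w : nat,
    (has_S_template n w /\ (forall p, has_S_template n p -> p <= w)) /\
    (forall s1 s, is_schur_number (n - 1) s1 -> is_schur_number n s ->
       2 * s1 + 1 <= w <= s).
Proof.
  destruct (ex_max_nat (has_S_template n) (schur_bound n)) as [w [Hw Hmax]].
  - exists 0; apply has_S_template_0.
  - intros p Hp; apply Nat.lt_le_incl, has_S_template_lt_schur_bound, Hp.
  - exists w; split; [split; assumption|].
    intros s1 s [[c1 Hc1] _] [_ Hs]; split.
    + apply Hmax; replace n with (S (n - 1)) by lia.
      exists (extend_colouring (n - 1) s1 c1).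
      apply S_template_extend_colouring, Hc1.
    + apply Hs; destruct Hw as [c [Hc _]]; exists c; exact Hc.
Qed.
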